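(* Let $A$ be any real $m\times n$ matrix with columns $A_1,\dots,A_n$, let $1\le k<n$, and let $\mathbf{S}$ be a random subset of $\{1,\dots,n\}$ distributed uniformly over all subsets of size $k$. Define $r_{\mathbf{S}}=\mathrm{rank}(A_{\mathbf{S}})$ and $t_{\mathbf{S}}=|\{i\notin\mathbf{S}: A_i\in\mathcal{R}(A_{\mathbf{S}})\}|$. Then $$\mathbb{E}[t_{\mathbf{S}}]\ge\Big(\frac nk-1\Big)\big(k-\mathbb{E}[r_{\mathbf{S}}]\big).$$
   Context: $A_{\mathbf{S}}$ denotes the submatrix of $A$ formed by the columns indexed by $\mathbf{S}$, and $\mathcal{R}(M)$ denotes the column (range) space of a matrix $M$. *)

From HB Require Import structures.
From mathcomp Require Import all_boot all_order all_algebra.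
Set Implicit Arguments. Unset Strict Implicit. Unset Printing Implicit Defensive.
Import Order.TTheory GRing.Theory Num.Theory.
Local Open Scope ring_scope.

Definition colsubset (R : Type) (m n : nat) (A : 'M[R]_(m, n)) (S : {set 'I_n})
  : 'M[R]_(m, #|S|) :=
  colsub (fun j : 'I_#|S| => enum_val j) A.

Definition in_colspace (F : fieldType) (m p : nat) (v : 'cV[F]_m) (M : 'M[F]_(m, p)) : bool :=
  (v^T <= M^T)%MS.

Definition r_S (F : fieldType) (m n : nat) (A : 'M[F]_(m, n)) (S : {set 'I_n}) : nat :=
  \rank (colsubset A S).

Definition t_S (F : fieldType) (m n : nat) (A : 'M[F]_(m, n)) (S : {set 'I_n}) : nat :=
  #|[set i : 'I_n | (i \notin S) && in_colspace (col i A) (colsubset A S)]|.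

Definition expect_ksub (R : numFieldType) (n k : nat) (f : {set 'I_n} -> nat) : R :=
  (\sum_(S : {set 'I_n} | #|S| == k) (f S)%:R) / ('C(n, k))%:R.

(* Work with the rows of B := A^T, so that R(A_S) becomes the row space V(S) spanned by
   the rows of B indexed by S.  Fix a (k+1)-set T and call i in T dependent when row i
   lies in V(T \ i).  The non-dependent rows of T are linearly independent, so with N
   dependent rows, k + 1 <= N + rank V(T); and removing row i lowers the rank by one
   exactly when i is not dependent.  Together these give
     sum_(i in T) (k [i dependent] + rank V(T \ i)) >= k (k + 1).
   Summing over T and reindexing the pairs (T, i) as (S, i) = (T \ i, i), i notin S,
   turns the left-hand side into k sum_S t_S + (n - k) sum_S r_S, while there are
   C(n, k+1) (k + 1) = C(n, k) (n - k) pairs on the right. *)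
From HB Require Import structures.
From mathcomp Require Import all_boot all_order all_algebra zify ring.
Import Order.TTheory GRing.Theory Num.Theory.
Set Implicit Arguments. Unset Strict Implicit. Unset Printing Implicit Defensive.
Local Open Scope ring_scope.

Section RowsSpan.
Variables (F : fieldType) (m n : nat) (B : 'M[F]_(n, m)).

Definition rows_span (S : {set 'I_n}) : 'M[F]_m := (\sum_(j in S) <<row j B>>)%MS.

Lemma rows_spanS (S T : {set 'I_n}) : S \subset T -> (rows_span S <= rows_span T)%MS.
Proof.
move=> sST; apply/sumsmx_subP => i iS.
by rewrite (sumsmx_sup i) ?(subsetP sST).
Qed.

Lemma rows_spanD1 (T : {set 'I_n}) i :
  i \in T -> (rows_span T :=: row i B + rows_span (T :\ i))%MS.
Proof.
move=> iT; rewrite /rows_span (big_setD1 i iT) /=.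
apply: adds_eqmx; first exact: genmxE.
by apply: eqmx_sums => j; rewrite !inE.
Qed.

Lemma mxrank_rows_spanD1 (T : {set 'I_n}) i : i \in T ->
  (\rank (rows_span T) + (row i B <= rows_span (T :\ i))%MS
     <= \rank (rows_span (T :\ i)) + 1)%N.
Proof.
move=> iT; rewrite (rows_spanD1 iT).
case: (boolP (row i B <= rows_span (T :\ i))%MS) => dep_i /=.
  by rewrite !addn1 ltnS mxrankS // addsmx_sub dep_i submx_refl.
rewrite addn0 addnC; apply: leq_trans (mxrank_adds_leqif _ _) _.
by rewrite leq_add2r rank_leq_row.
Qed.

Lemma card_le_mxrank_rows_span (X : {set 'I_n}) :
  {in X, forall i, ~~ (row i B <= rows_span (X :\ i))%MS} ->
  (#|X| <= \rank (rows_span X))%N.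
Proof.
elim: {X}_.+1 {-2}X (ltnSn #|X|) => // c IHc X ltXc indepX.
have [-> | [i iX]] := set_0Vmem X; first by rewrite cards0.
have rankXi : (#|X :\ i| <= \rank (rows_span (X :\ i)))%N.
  apply: IHc; first by rewrite -ltnS (leq_trans _ ltXc) // (cardsD1 i X) iX.
  move=> j /setD1P[_ jX]; apply: contra (indepX j jX) => /submx_trans; apply.
  by apply: rows_spanS; apply/subsetP => x; rewrite !inE => /and3P[-> _ ->].
have rank_lt : (\rank (rows_span (X :\ i)) < \rank (rows_span X))%N.
  apply: rank_ltmx; rewrite ltmxE rows_spanS ?subsetDl //= (rows_spanD1 iX).
  by apply: contra (indepX i iX) => /(submx_trans (addsmxSl _ _)).
by rewrite (cardsD1 i X) iX add1n (leq_ltn_trans rankXi).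
Qed.

Lemma sum_mxrank_rows_spanD1 (T : {set 'I_n}) :
  (#|T| * #|T|.-1 <= \sum_(i in T)
     (#|T|.-1 * (row i B <= rows_span (T :\ i))%MS + \rank (rows_span (T :\ i))))%N.
Proof.
pose dep := [set i in T | (row i B <= rows_span (T :\ i))%MS].
have sum_dep : (\sum_(i in T) (row i B <= rows_span (T :\ i))%MS = #|dep|)%N.
  by rewrite -sum1dep_card big_mkcondr; apply: eq_bigr => i _; case: (_ <= _)%MS.
have card_indep : (#|T| <= #|dep| + \rank (rows_span T))%N.
  have dep_sub : dep \subset T by apply/subsetP => i; rewrite inE => /andP[].
  rewrite -(cardsID dep T) (setIidPr dep_sub) leq_add2l.
  apply: leq_trans (card_le_mxrank_rows_span _) (mxrankS (rows_spanS _)).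
    move=> i /setDP[iT /negP i_indep]; apply/negP => dep_i; apply: i_indep.
    by rewrite !inE iT (submx_trans dep_i) ?rows_spanS ?setSD ?subsetDl.
  by rewrite subsetDl.
have rank_drop : (#|T| * \rank (rows_span T) + #|dep|
                   <= \sum_(i in T) \rank (rows_span (T :\ i)) + #|T|)%N.
  rewrite -sum_dep -sum_nat_const -big_split -[in X in (_ <= X)%N]sum1_card -big_split.
  by apply: leq_sum => i; apply: mxrank_rows_spanD1.
rewrite big_split /= -big_distrr /= sum_dep.
by move: (#|T|) (#|dep|) (\rank _) (\sum_(i in T) _) card_indep rank_drop; nia.
Qed.

End RowsSpan.

Lemma sum_ksubsets_notin (I : finType) (V : nmodType) k (G : {set I} -> I -> V) :
  \sum_(S : {set I} | #|S| == k) \sum_(i | i \notin S) G S i =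
  \sum_(T : {set I} | #|T| == k.+1) \sum_(i in T) G (T :\ i) i.
Proof.
rewrite !pair_big_dep /=.
rewrite (reindex_onto (fun q : {set I} * I => (q.1 :\ q.2, q.2))
                      (fun p : {set I} * I => (p.2 |: p.1, p.2))) /=.
  apply: eq_bigl => [[T i]] /=; rewrite !inE eqxx /= andbT.
  case iT: (i \in T); first by rewrite setD1K // eqxx !andbT (cardsD1 i T) iT add1n eqSS.
  by rewrite andbF; apply/andP => -[_ /eqP [T_eq]]; rewrite -T_eq setU11 in iT.
by move=> [S i] /= /andP[_ iS]; rewrite setU1K.
Qed.

Section ColumnSubsets.
Variables (F : fieldType) (m n : nat) (A : 'M[F]_(m, n)).

Lemma trmx_colsubset_eqmx (S : {set 'I_n}) :
  ((colsubset A S)^T :=: rows_span A^T S)%MS.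
Proof.
have -> : (colsubset A S)^T = rowsub (fun j : 'I_#|S| => enum_val j) A^T.
  by apply/matrixP => i j; rewrite !mxE.
rewrite /rows_span (big_enum_val (fun j => <<row j A^T>>%MS)) /=.
apply/eqmxP/andP; split.
  by apply/row_subP => i; rewrite row_rowsub (sumsmx_sup i) // genmxE.
by apply/sumsmx_subP => i _; rewrite genmxE -row_rowsub row_sub.
Qed.

Lemma r_S_rows_span (S : {set 'I_n}) : r_S A S = \rank (rows_span A^T S).
Proof. by rewrite /r_S -mxrank_tr trmx_colsubset_eqmx. Qed.

Lemma t_S_rows_span (S : {set 'I_n}) :
  t_S A S = (\sum_(i | i \notin S) (row i A^T <= rows_span A^T S)%MS)%N.
Proof.
rewrite /t_S -sum1dep_card big_mkcondr /=; apply: eq_bigr => i _.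
by rewrite /in_colspace tr_col trmx_colsubset_eqmx.
Qed.

Lemma sum_ksubsets_t_S_r_S k :
  (k * (n - k) * 'C(n, k) <= k * \sum_(S : {set 'I_n} | #|S| == k) t_S A S
                             + (n - k) * \sum_(S : {set 'I_n} | #|S| == k) r_S A S)%N.
Proof.
have sum_T (T : {set 'I_n}) : #|T| == k.+1 -> (k.+1 * k <= \sum_(i in T)
    (k * (row i A^T <= rows_span A^T (T :\ i))%MS + \rank (rows_span A^T (T :\ i))))%N.
  by move=> /eqP cardT; have := sum_mxrank_rows_spanD1 A^T T; rewrite cardT.
have double_count : (k * \sum_(S : {set 'I_n} | #|S| == k) t_S A S
                      + (n - k) * \sum_(S : {set 'I_n} | #|S| == k) r_S A S
    = \sum_(S : {set 'I_n} | #|S| == k) \sum_(i | i \notin S)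
        (k * (row i A^T <= rows_span A^T S)%MS + \rank (rows_span A^T S)))%N.
  rewrite !big_distrr -big_split /=; apply: eq_bigr => S /eqP cardS.
  rewrite big_split /= -big_distrr sum_nat_cond_const t_S_rows_span r_S_rows_span.
  by rewrite -/(~: S) cardsCs setCK card_ord cardS.
rewrite double_count sum_ksubsets_notin (leq_trans _ (leq_sum _ sum_T)) //.
by rewrite sum_nat_cond_const card_draws card_ord -mulnA -mul_bin_left; nia.
Qed.

End ColumnSubsets.

Theorem lemma3 (R : realFieldType) (m n k : nat) (A : 'M[R]_(m, n))
  (hk1 : (1 <= k)%N) (hkn : (k < n)%N) :
  expect_ksub R k (t_S A) >=
    (n%:R / k%:R - 1) * (k%:R - expect_ksub R k (r_S A)).
Proof.
have := sum_ksubsets_t_S_r_S A k.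
rewrite /expect_ksub -!natr_sum -(ler_nat R) !natrD !natrM natrB ?(ltnW hkn) // -subr_ge0.
have Cpos : 0 < 'C(n, k)%:R :> R by rewrite ltr0n bin_gt0 ltnW.
have kpos : 0 < k%:R :> R by rewrite ltr0n.
set c := 'C(n, k)%:R; set K := k%:R; set N := n%:R.
set t := (\sum_(S | _) t_S A S)%:R; set r := (\sum_(S | _) r_S A S)%:R.
move=> slack_ge0; have := divr_ge0 slack_ge0 (ltW (mulr_gt0 kpos Cpos)).
suff -> : (K * t + (N - K) * r - K * (N - K) * c) / (K * c)
          = t / c - (N / K - 1) * (K - r / c) by rewrite subr_ge0.
by field; rewrite ?gt_eqF.
Qed.
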